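(* Let $\mathcal{S}$ be a subcategory of $\mathbf{Set}$ such that: (1) $\mathcal{S}$ contains neither the reversal $[1]\to[1]$, $x\mapsto 1-x$, nor the diagonal $[1]\to[1]^2$, $x\mapsto(x,x)$; (2) $\mathcal{S}$ contains $\Delta_1^*$ as a wide subcategory (so the objects of $\mathcal{S}$ are exactly the sets $[1]^n$, $n\geq 0$, and every $\Delta_1^*$-morphism is an $\mathcal{S}$-morphism); (3) every $\mathcal{S}$-morphism factors as a surjective $\mathcal{S}$-morphism followed by an injective $\mathcal{S}$-morphism. Then $\mathcal{S}$ is a subcategory of $\boxplus$. Moreover, the choice $\mathcal{S}=\boxplus$ satisfies all three conditions (1)–(3).
   Context: $[1]=\{0<1\}$; for $n\geq 0$, $[1]^n$ is the $n$-fold product poset with componentwise order, $[1]^0=[0]$ a one-point poset. In a poset $P$, an interval is a non-empty subset of the form $[x,z]_P=\{y\in P: x\leq y\leq z\}$. A function between posets is interval-preserving if it maps every interval onto an interval. $\boxplus$ is the category whose objects are the posets $[1]^n$ ($n\geq 0$) and whose morphisms are all interval-preserving monotone functions between them. $\Delta_1^*$ is the smallest subcategory of $\mathbf{Set}$ which contains all functions between the sets $[0]$ and $[1]$ and is closed under Cartesian products of functions (for $f:[1]^a\to[1]^b$, $g:[1]^c\to[1]^d$, $f\times g:[1]^{a+c}\to[1]^{b+d}$); its objects are the $[1]^n$, and it is generated by the cofaces $[1]^{i-1}\times\delta_\pm\times[1]^{n-i}$ (with $\delta_-(0)=0$, $\delta_+(0)=1$, $\delta_\pm:[0]\to[1]$)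 and codegeneracies (projections $[1]^{n+1}\to[1]^n$ forgetting one coordinate). *)

From mathcomp Require Import all_boot.
Set Implicit Arguments. Unset Strict Implicit. Unset Printing Implicit Defensive.

(* The poset [1]^n: boolean vectors of length n, componentwise order. *)
Notation cube n := {ffun 'I_n -> bool}.
Definition cle n (x y : cube n) : bool := [forall i, x i ==> y i].

(* Morphisms between cubes in Set: (finite, hence extensional) functions. *)
Notation mor m n := {ffun cube m -> cube n}.
Definition idm n : mor n n := [ffun x => x].
Definition compm m n p (f : mor m n) (g : mor n p) : mor m p := [ffun x => g (f x)].

Definition MorClass := forall m n : nat, mor m n -> Prop.
Definition is_subcat (S : MorClass) : Prop :=
  (forall n, S n n (idm n)) /\
  (forall m n p (f : mor m n) (g : mor n p), S m n f -> S n p g -> S m p (compm f g)).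

Definition cleft a c (x : cube (a + c)) : cube a := [ffun i => x (lshift c i)].
Definition cright a c (x : cube (a + c)) : cube c := [ffun j => x (rshift a j)].
Definition cconcat b d (u : cube b) (v : cube d) : cube (b + d) :=
  [ffun k => match split k with inl i => u i | inr j => v j end].
Definition prodm a b c d (f : mor a b) (g : mor c d) : mor (a + c) (b + d) :=
  [ffun x => cconcat (f (cleft x)) (g (cright x))].

(* Delta_1^*: smallest subcategory of Set containing all functions
   between [0] = [1]^0 and [1] = [1]^1 (i.e. [0]->[1], [1]->[0], and identities)
   and closed under Cartesian products of functions. *)
Inductive Delta1s : MorClass :=
  | D1_base01 (f : mor 0 1) : Delta1s f
  | D1_base10 (f : mor 1 0) : Delta1s f
  | D1_id n : Delta1s (idm n)
  | D1_comp m n p (f : mor m n) (g : mor n p) :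
      Delta1s f -> Delta1s g -> Delta1s (compm f g)
  | D1_prod a b c d (f : mor a b) (g : mor c d) :
      Delta1s f -> Delta1s g -> Delta1s (prodm f g).

Definition reversal : mor 1 1 := [ffun x : cube 1 => [ffun i : 'I_1 => ~~ x i]].
Definition diagonal : mor 1 2 := [ffun x : cube 1 => [ffun _ : 'I_2 => x ord0]].

Definition interval n (x z : cube n) : {set cube n} := [set y | cle x y && cle y z].
Definition is_interval n (A : {set cube n}) : Prop :=
  exists x z : cube n, cle x z /\ A = interval x z.

Definition monotone m n (f : mor m n) : Prop :=
  forall x y : cube m, cle x y -> cle (f x) (f y).
Definition interval_preserving m n (f : mor m n) : Prop :=
  forall x z : cube m, cle x z -> is_interval [set f y | y in interval x z].

Definition boxplus : MorClass := fun m n f => monotone f /\ interval_preserving f.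

Definition cond1 (S : MorClass) : Prop := ~ S 1 1 reversal /\ ~ S 1 2 diagonal.
Definition cond2 (S : MorClass) : Prop := forall m n (f : mor m n), Delta1s f -> S m n f.
Definition cond3 (S : MorClass) : Prop :=
  forall m n (f : mor m n), S m n f ->
    exists k (e : mor m k) (i : mor k n),
      [/\ S m k e, S k n i, (forall y : cube k, exists x, e x = y),
          injective i & f = compm e i].

(* Let f be in S. Precomposing f with an edge [1] -> [1]^m of the cube and postcomposing it with
   a projection onto one or two coordinates gives, by Delta_1^* <= S, a morphism of S between
   [1] and [1] or [1]^2. Since S contains neither the reversal nor the diagonal, f is monotone
   along every edge and changes at most one coordinate along it; hence f is monotone and does
   not increase Hamming distance. An injective i : [1]^k -> [1]^n in S therefore maps the 2^k
   points of its domain into the interval [i 0, i 1], which has at most 2^(hamming (i 0) (i 1))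
   <= 2^k points, so it maps onto it. A surjective monotone map preserves 0 and 1, so the
   factorization (3) shows that every f in S maps [1]^m onto [f 0, f 1]. Applied to f composed
   with the Delta_1^* retraction of [1]^m onto an interval [x, z], this says that f maps [x, z]
   onto [f x, f z].
   Conversely, boxplus is closed under composition and products and contains the maps between
   [0] and [1], and an interval-preserving f factors as f followed by the restriction to the
   coordinates where f 0 and f 1 differ, then the map filling in the other coordinates from f 0. *)

From mathcomp Require Import all_boot.
Set Implicit Arguments. Unset Strict Implicit. Unset Printing Implicit Defensive.

Definition bot m : cube m := [ffun _ => false].
Definition top m : cube m := [ffun _ => true].
Definition pt (b : bool) : cube 1 := [ffun _ => b].
Definition upd m (x : cube m) (a : 'I_m) (b : bool) : cube m :=
  [ffun i => if i == a then b else x i].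
Definition ctail m (x : cube m.+1) : cube m := [ffun j => x (lift ord0 j)].

Lemma compmE m n p (f : mor m n) (g : mor n p) x : compm f g x = g (f x).
Proof. by rewrite ffunE. Qed.

Lemma cube0 (u v : cube 0) : u = v.
Proof. by apply/ffunP => -[]. Qed.

Lemma cube_eqS m (x y : cube m.+1) : x ord0 = y ord0 -> ctail x = ctail y -> x = y.
Proof.
move=> eq0 /ffunP eqt; apply/ffunP => k.
by case: (unliftP ord0 k) => [j|] ->; rewrite ?eq0 //; have := eqt j; rewrite !ffunE.
Qed.

Lemma mor1_ext n (f g : mor 1 n) : (forall b, f (pt b) = g (pt b)) -> f = g.
Proof.
move=> eqfg; apply/ffunP => t.
by have -> : t = pt (t ord0) by apply/ffunP => i; rewrite (ord1 i) ffunE.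
Qed.

Lemma card_cube m : #|{: cube m}| = 2 ^ m.
Proof. by rewrite card_ffun card_bool card_ord. Qed.

Lemma upd_id m (x : cube m) a : upd x a (x a) = x.
Proof. by apply/ffunP => i; rewrite ffunE; case: eqP => // ->. Qed.

Lemma upd_upd m (x : cube m) a b c : upd (upd x a b) a c = upd x a c.
Proof. by apply/ffunP => i; rewrite !ffunE; case: eqP. Qed.

Lemma cleP m (x y : cube m) : reflect (forall i, x i ==> y i) (cle x y).
Proof. exact: forallP. Qed.

Lemma cle_refl m (x : cube m) : cle x x.
Proof. by apply/cleP => i; exact: implybb. Qed.

Lemma cle_trans m (x y z : cube m) : cle x y -> cle y z -> cle x z.
Proof.
by move=> /cleP xy /cleP yz; apply/cleP => i; move: (xy i) (yz i); case: (x i); case: (y i).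
Qed.

Lemma cle_anti m (x y : cube m) : cle x y -> cle y x -> x = y.
Proof.
move=> /cleP xy /cleP yx; apply/ffunP => i.
by move: (xy i) (yx i); case: (x i); case: (y i).
Qed.

Lemma cle_bot m (x : cube m) : cle (bot m) x.
Proof. by apply/cleP => i; rewrite ffunE. Qed.

Lemma cle_top m (x : cube m) : cle x (top m).
Proof. by apply/cleP => i; rewrite ffunE implybT. Qed.

Lemma cle_neq m (x z : cube m) i : cle x z -> x i != z i -> (x i = false) /\ (z i = true).
Proof. by move=> /cleP /(_ i); case: (x i); case: (z i). Qed.

Lemma in_interval m (x z y : cube m) : (y \in interval x z) = cle x y && cle y z.
Proof. by rewrite inE. Qed.

Lemma interval_fixed m (x z y : cube m) i :
  y \in interval x z -> x i = z i -> y i = x i.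
Proof.
rewrite in_interval => /andP [/cleP /(_ i) xy /cleP /(_ i) yz] xz.
by move: xy yz; rewrite xz; case: (y i); case: (z i).
Qed.

Lemma interval_id m (x : cube m) : interval x x = [set x].
Proof.
apply/setP => y; rewrite in_interval inE.
by apply/andP/eqP => [[xy yx]|->]; [apply: cle_anti | rewrite cle_refl].
Qed.

Lemma interval_bot_top m : interval (bot m) (top m) = [set: cube m].
Proof. by apply/setP => y; rewrite in_interval in_setT cle_bot cle_top. Qed.

Lemma monotone_surj_bot m k (e : mor m k) :
  monotone e -> (forall y, exists x, e x = y) -> e (bot m) = bot k.
Proof.
move=> mono surj; have [x ex] := surj (bot k).
by apply: cle_anti (cle_bot _); rewrite -ex; apply/mono/cle_bot.
Qed.

Lemma monotone_surj_top m k (e : mor m k) :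
  monotone e -> (forall y, exists x, e x = y) -> e (top m) = top k.
Proof.
move=> mono surj; have [x ex] := surj (top k).
by apply: cle_anti (cle_top _) _; rewrite -ex; apply/mono/cle_top.
Qed.

(** * Hamming distance *)

Definition diff_set m (x y : cube m) : {set 'I_m} := [set i | x i != y i].
Definition hamming m (x y : cube m) : nat := #|diff_set x y|.

Lemma hammingxx m (x : cube m) : hamming x x = 0.
Proof. by apply: eq_card0 => i; rewrite !inE eqxx. Qed.

Lemma hammingC m (x y : cube m) : hamming x y = hamming y x.
Proof. by apply: eq_card => i; rewrite !inE eq_sym. Qed.

Lemma hamming_tri m (x y z : cube m) : hamming x z <= hamming x y + hamming y z.
Proof.
apply: leq_trans (leq_card_setU _ _); apply: subset_leq_card.
by apply/subsetP => i; rewrite !inE; case: (x i); case: (y i); case: (z i).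
Qed.

Lemma hamming_bot_top m : hamming (bot m) (top m) = m.
Proof. by rewrite -[RHS]card_ord; apply: eq_card => i; rewrite !inE !ffunE. Qed.

Lemma hamming_upd m (x y : cube m) a :
  x a != y a -> hamming x y = (hamming (upd x a (y a)) y).+1.
Proof.
move=> xya; rewrite /hamming (cardD1 a) inE xya; congr _.+1.
by apply: eq_card => i; rewrite !inE ffunE; case: eqP => [->|]; rewrite ?eqxx.
Qed.

Lemma hamming_ind m (P : cube m -> cube m -> Prop) :
  (forall y, P y y) ->
  (forall (x y : cube m) a, x a != y a -> P (upd x a (y a)) y -> P x y) ->
  forall x y, P x y.
Proof.
move=> Prefl Pstep x y; have [k] := ubnP (hamming x y); elim: k x => // k IH x.
case: (pickP (fun i => x i != y i)) => [a xya | xy].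
  by rewrite (hamming_upd xya) ltnS => /IH; apply: Pstep.
by have -> : x = y by apply/ffunP => i; apply/eqP/negbFE/xy.
Qed.

Lemma edge_monotone m n (f : mor m n) :
  (forall x a, cle (f (upd x a false)) (f (upd x a true))) -> monotone f.
Proof.
move=> fedge; apply: hamming_ind => [y _|x y a xya IH xy]; first exact: cle_refl.
have [xa ya] := cle_neq xy xya.
apply: cle_trans (IH _); first by rewrite ya -{1}(upd_id x a) xa.
apply/cleP => i; rewrite ffunE; case: eqP => [->|_]; first by rewrite ya implybT.
exact/cleP.
Qed.

Lemma edge_hamming_contract m n (f : mor m n) :
  (forall x a, hamming (f (upd x a false)) (f (upd x a true)) <= 1) ->
  forall x y, hamming (f x) (f y) <= hamming x y.
Proof.
move=> fedge; apply: hamming_ind => [y|x y a xya IH]; first by rewrite !hammingxx.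
rewrite (hamming_upd xya) -add1n; apply: leq_trans (hamming_tri _ (f (upd x a (y a))) _) _.
rewrite leq_add ?IH //= -{1}(upd_id x a) -(upd_upd x a false (x a)) -(upd_upd x a false (y a)).
by move: xya; case: (x a); case: (y a) => // _; rewrite hammingC.
Qed.

(** * Restriction to a set of coordinates *)

Section Restriction.
Variables (n : nat) (D : {set 'I_n}).

Definition restrict (y : cube n) : cube #|D| := [ffun k => y (enum_val k)].
Definition extend (c : cube n) (u : cube #|D|) : cube n :=
  [ffun j => if [pick k | enum_val k == j] is Some k then u k else c j].

Lemma restrictK (c : cube n) : cancel (extend c) restrict.
Proof.
move=> u; apply/ffunP => k; rewrite !ffunE; case: pickP => [k' /eqP/enum_val_inj -> //|].
by move/(_ k); rewrite eqxx.
Qed.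

Lemma extend_out (c : cube n) u j : j \notin D -> extend c u j = c j.
Proof.
by move=> jD; rewrite ffunE; case: pickP => // k /eqP eq_kj; rewrite -eq_kj enum_valP in jD.
Qed.

Lemma extendK (c y : cube n) : (forall j, j \notin D -> y j = c j) -> extend c (restrict y) = y.
Proof.
move=> yc; apply/ffunP => j; rewrite ffunE.
case: pickP => [k /eqP <-|nopick]; first by rewrite ffunE.
have [jD|/yc //] := boolP (j \in D).
by have := nopick (enum_rank_in jD j); rewrite enum_rankK_in ?eqxx.
Qed.

Lemma cle_restrict (y y' : cube n) : cle y y' -> cle (restrict y) (restrict y').
Proof. by move/cleP => yy'; apply/cleP => k; rewrite !ffunE. Qed.

Lemma cle_extend (c c' : cube n) (u u' : cube #|D|) :
  cle c c' -> cle u u' -> cle (extend c u) (extend c' u').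
Proof.
move=> /cleP cc' /cleP uu'; apply/cleP => j; rewrite !ffunE.
by case: pickP => [k _|_]; [apply: uu' | apply: cc'].
Qed.

Lemma extend_interval (c d : cube n) (u : cube #|D|) :
  cle c d -> cle (restrict c) u -> cle u (restrict d) -> extend c u \in interval c d.
Proof.
move=> /cleP cd /cleP cu /cleP ud; rewrite in_interval; apply/andP; split; apply/cleP => j.
all: rewrite ffunE; case: pickP => [k /eqP <-|_]; rewrite ?implybb //.
- by have := cu k; rewrite ffunE.
- by have := ud k; rewrite ffunE.
Qed.

End Restriction.

Arguments extend {n} D c u.

Lemma restrict_diff_set m (a b : cube m) :
  cle a b -> restrict (diff_set a b) a = bot _ /\ restrict (diff_set a b) b = top _.
Proof.
move=> ab; split; apply/ffunP => k; rewrite !ffunE;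
  by have := enum_valP k; rewrite inE => /(cle_neq ab) [ai bi]; rewrite ?ai ?bi.
Qed.

(* Restricting to the coordinates where x and z differ is injective on [x, z]. *)
Lemma card_interval n (x z : cube n) : #|interval x z| <= 2 ^ hamming x z.
Proof.
have fixed w : w \in interval x z -> forall j, j \notin diff_set x z -> w j = x j.
  by move=> wI j; rewrite inE negbK => /eqP; apply: interval_fixed.
rewrite -card_cube -(@card_in_imset _ _ (restrict (diff_set x z))); first exact: max_card.
by move=> y y' yI y'I eq_y; rewrite -(extendK (fixed _ yI)) -(extendK (fixed _ y'I)) eq_y.
Qed.

Lemma monotone_image_sub m n (f : mor m n) x z :
  monotone f -> f @: interval x z \subset interval (f x) (f z).
Proof.
move=> mono; apply/subsetP => w /imsetP [y + ->].
by rewrite !in_interval => /andP [xy yz]; rewrite !mono.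
Qed.

Lemma monotone_image_interval m n (f : mor m n) x z : monotone f ->
  {subset interval (f x) (f z) <= f @: interval x z} ->
  f @: interval x z = interval (f x) (f z).
Proof.
by move=> mono sub; apply/eqP; rewrite eqEsubset monotone_image_sub //; apply/subsetP.
Qed.

Lemma boxplusP m n (f : mor m n) : boxplus f <->
  monotone f /\ forall x z, cle x z -> f @: interval x z = interval (f x) (f z).
Proof.
split=> [[mono ip]|[mono fI]]; last first.
  by split=> // x z xz; exists (f x), (f z); rewrite fI // mono.
split=> // x z xz; have [a [b [ab E]]] := ip x z xz.
have bounds y : y \in interval x z -> cle (f x) (f y) && cle (f y) (f z).
  by rewrite in_interval => /andP [xy yz]; rewrite !mono.
have /imsetP [y yI eq_a] : a \in f @: interval x z by rewrite E in_interval cle_refl ab.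
have /imsetP [y' y'I eq_b] : b \in f @: interval x z by rewrite E in_interval cle_refl ab.
rewrite {}eq_a {}eq_b {ab} in E.
have : f x \in interval (f y) (f y') by rewrite -E imset_f // in_interval cle_refl xz.
have : f z \in interval (f y) (f y') by rewrite -E imset_f // in_interval cle_refl xz.
rewrite !in_interval => /andP [_ zy'] /andP [yx _].
have /andP [xy _] := bounds _ yI; have /andP [_ y'z] := bounds _ y'I.
by rewrite E (cle_anti yx xy) (cle_anti zy' y'z).
Qed.

Lemma cleft1 c (x : cube (1 + c)) : cleft x = pt (x ord0).
Proof. by apply/ffunP => i; rewrite (ord1 i) !ffunE; congr (x _); apply: val_inj. Qed.

Lemma cright1 c (x : cube (1 + c)) : cright x = ctail x.
Proof. by apply/ffunP => j; rewrite !ffunE; congr (x _); apply: val_inj. Qed.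

Lemma cright0 c (x : cube (0 + c)) : cright x = x.
Proof. by apply/ffunP => j; rewrite !ffunE; congr (x _); apply: val_inj. Qed.

Lemma cleft_cconcat b d (u : cube b) (v : cube d) : cleft (cconcat u v) = u.
Proof. by apply/ffunP => i; rewrite !ffunE (unsplitK (inl _)). Qed.

Lemma cright_cconcat b d (u : cube b) (v : cube d) : cright (cconcat u v) = v.
Proof. by apply/ffunP => j; rewrite !ffunE (unsplitK (inr _)). Qed.

Lemma cconcatK a c (x : cube (a + c)) : cconcat (cleft x) (cright x) = x.
Proof.
apply/ffunP => k; rewrite !ffunE.
by case: splitP => [i|j] eq_k; rewrite ffunE; congr (x _); apply: val_inj; rewrite /= eq_k.
Qed.

Lemma cle_split a c (x y : cube (a + c)) :
  cle x y = cle (cleft x) (cleft y) && cle (cright x) (cright y).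
Proof.
apply/cleP/andP => [xy|[/cleP l /cleP r] k].
  by split; apply/cleP => i; rewrite !ffunE.
by rewrite -(cconcatK x) -(cconcatK y) !ffunE; case: (split k).
Qed.

Lemma cle_cconcat b d (u u' : cube b) (v v' : cube d) :
  cle (cconcat u v) (cconcat u' v') = cle u u' && cle v v'.
Proof. by rewrite cle_split !cleft_cconcat !cright_cconcat. Qed.

Lemma prodm_ord0 a c d (f : mor a 1) (g : mor c d) x : prodm f g x ord0 = f (cleft x) ord0.
Proof.
have -> : ord0 = lshift d (ord0 : 'I_1) by apply: val_inj.
by rewrite !ffunE (unsplitK (inl _)).
Qed.

Lemma ctail_prodm a c d (f : mor a 1) (g : mor c d) x : ctail (prodm f g x) = g (cright x).
Proof.
apply/ffunP => j; rewrite ffunE.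
have -> : lift ord0 j = rshift 1 j :> 'I_(1 + d) by apply: val_inj.
by rewrite !ffunE (unsplitK (inr _)).
Qed.

Lemma prodm0 a c d (f : mor a 0) (g : mor c d) x : prodm f g x = g (cright x).
Proof.
apply/ffunP => k; rewrite !ffunE; case: splitP => [[] // | j /= eq_kj].
by congr (_ _); apply: val_inj.
Qed.

(** * Some morphisms of Delta_1^* *)

Definition coord_map m (j : 'I_m) : mor m 1 := [ffun y : cube m => pt (y j)].
Definition pair_map m (j j' : 'I_m) : mor m 2 :=
  [ffun y : cube m => [ffun k : 'I_2 => if k == ord0 then y j else y j']].
Definition edge_map m (x : cube m) (a : 'I_m) : mor 1 m :=
  [ffun t : cube 1 => upd x a (t ord0)].
Definition retract m (x z : cube m) : mor m m :=
  [ffun y : cube m => [ffun i => if x i == z i then x i else y i]].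

Lemma lift0_eq0 n (j : 'I_n) : (lift ord0 j == ord0 :> 'I_n.+1) = false.
Proof. by rewrite eq_sym (negbTE (neq_lift _ _)). Qed.

Lemma Delta1s_to0 m (f : mor m 0) : Delta1s f.
Proof.
elim: m f => [|m IH] f.
  have -> : f = idm 0 by apply/ffunP => x; apply: cube0.
  exact: D1_id.
have -> : f = prodm ([ffun _ => bot 0] : mor 1 0) ([ffun _ => bot 0] : mor m 0).
  by apply/ffunP => x; apply: cube0.
exact: (@D1_prod 1 0 m 0 _ _ (D1_base10 _) (IH _)).
Qed.

Lemma Delta1s_from0 m (f : mor 0 m) : Delta1s f.
Proof.
elim: m f => [|m IH] f.
  have -> : f = idm 0 by apply/ffunP => x; apply: cube0.
  exact: D1_id.
have -> : f = prodm ([ffun t => pt (f t ord0)] : mor 0 1) [ffun t => ctail (f t)].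
  apply/ffunP => t; apply: cube_eqS; rewrite ?prodm_ord0 ?ctail_prodm !ffunE.
  - by rewrite [cleft _](cube0 _ t).
  - by rewrite [cright _](cube0 _ t).
exact: (@D1_prod 0 1 0 m _ _ (D1_base01 _) (IH _)).
Qed.

Lemma Delta1s_coord m (j : 'I_m) : Delta1s (coord_map j).
Proof.
elim: m j => [[] //|m IH] j.
case: (unliftP ord0 j) => [j'|] ->.
  have -> : coord_map (lift ord0 j') =
            prodm ([ffun _ => bot 0] : mor 1 0) (coord_map j') :> mor (1 + m) (0 + 1).
    by apply/ffunP => y; rewrite prodm0 cright1 !ffunE.
  exact: (@D1_prod 1 0 m 1 _ _ (D1_base10 _) (IH j')).
have -> : coord_map ord0 = prodm (idm 1) ([ffun _ => bot 0] : mor m 0).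
  apply/ffunP => y; apply: cube_eqS; last exact: cube0.
  by rewrite prodm_ord0 cleft1 !ffunE.
exact: (@D1_prod 1 1 m 0 _ _ (D1_id 1) (Delta1s_to0 _)).
Qed.

Lemma Delta1s_pair m (j j' : 'I_m) : j < j' -> Delta1s (pair_map j j').
Proof.
elim: m j j' => [[] //|m IH] j j'.
case: (unliftP ord0 j) => [i|] ->; case: (unliftP ord0 j') => [i'|] -> // lt.
  have -> : pair_map (lift ord0 i) (lift ord0 i') =
            prodm ([ffun _ => bot 0] : mor 1 0) (pair_map i i') :> mor (1 + m) (0 + 2).
    by apply/ffunP => y; rewrite prodm0 cright1 !ffunE; apply/ffunP => k; rewrite !ffunE.
  exact: (@D1_prod 1 0 m 2 _ _ (D1_base10 _) (IH _ _ lt)).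
have -> : pair_map ord0 (lift ord0 i') = prodm (idm 1) (coord_map i').
  apply/ffunP => y; apply: cube_eqS; first by rewrite prodm_ord0 cleft1 !ffunE.
  by rewrite ctail_prodm cright1; apply/ffunP => k; rewrite (ord1 k) !ffunE lift0_eq0.
exact: (@D1_prod 1 1 m 1 _ _ (D1_id 1) (Delta1s_coord _)).
Qed.

Lemma Delta1s_edge m (x : cube m) (a : 'I_m) : Delta1s (edge_map x a).
Proof.
elim: m x a => [_ [] //|m IH] x a.
case: (unliftP ord0 a) => [a'|] ->.
  have -> : edge_map x (lift ord0 a') =
            prodm ([ffun _ => pt (x ord0)] : mor 0 1) (edge_map (ctail x) a').
    apply/ffunP => t; apply: cube_eqS; first by rewrite prodm_ord0 !ffunE eq_sym lift0_eq0.
    rewrite ctail_prodm cright0; apply/ffunP => j.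
    by rewrite !ffunE (inj_eq (@lift_inj _ ord0)).
  exact: (@D1_prod 0 1 1 m _ _ (Delta1s_from0 _) (IH _ _)).
have -> : edge_map x ord0 = prodm (idm 1) ([ffun _ => ctail x] : mor 0 m).
  apply/ffunP => t; apply: cube_eqS; first by rewrite prodm_ord0 cleft1 !ffunE eqxx.
  by rewrite ctail_prodm; apply/ffunP => j; rewrite !ffunE lift0_eq0.
exact: (@D1_prod 1 1 0 m _ _ (D1_id 1) (Delta1s_from0 _)).
Qed.

Lemma Delta1s_retract m (x z : cube m) : Delta1s (retract x z).
Proof.
elim: m x z => [|m IH] x z.
  have -> : retract x z = idm 0 by apply/ffunP => y; apply: cube0.
  exact: D1_id.
pose h : mor 1 1 := if x ord0 == z ord0 then
  compm ([ffun _ => bot 0] : mor 1 0) ([ffun _ => pt (x ord0)] : mor 0 1) else idm 1.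
have Dh : Delta1s h.
  rewrite /h; case: ifP => _; last exact: D1_id.
  exact: D1_comp (Delta1s_to0 _) (Delta1s_from0 _).
have -> : retract x z = prodm h (retract (ctail x) (ctail z)).
  apply/ffunP => y; apply: cube_eqS.
    by rewrite prodm_ord0 cleft1 /h !ffunE; case: ifP; rewrite !ffunE.
  by rewrite ctail_prodm cright1; apply/ffunP => j; rewrite !ffunE.
exact: (@D1_prod 1 1 m m _ _ Dh (IH _ _)).
Qed.

Lemma retract_fix m (x z y : cube m) : y \in interval x z -> retract x z y = y.
Proof.
by move=> yI; apply/ffunP => i; rewrite !ffunE; case: eqP => // /(interval_fixed yI).
Qed.

Lemma retract_in m (x z y : cube m) : cle x z -> retract x z y \in interval x z.
Proof.
move=> xz; rewrite in_interval; apply/andP; split; apply/cleP => i; rewrite !ffunE.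
all: case: eqP => [->|/eqP/(cle_neq xz) [xi zi]]; rewrite ?xi ?zi ?implybb ?implybT //.
Qed.

Lemma retract_image m (x z : cube m) :
  cle x z -> retract x z @: [set: cube m] = interval x z.
Proof.
move=> xz; apply/setP => w; apply/imsetP/idP => [[y _ ->]|wI]; first exact: retract_in.
by exists w; rewrite ?in_setT ?retract_fix.
Qed.

Lemma retract_bot m (x z : cube m) : cle x z -> retract x z (bot m) = x.
Proof. by move=> xz; apply/ffunP => i; rewrite !ffunE; case: eqP => // /eqP/(cle_neq xz) []. Qed.

Lemma retract_top m (x z : cube m) : cle x z -> retract x z (top m) = z.
Proof.
by move=> xz; apply/ffunP => i; rewrite !ffunE; case: eqP => [->|/eqP/(cle_neq xz) []].
Qed.

(** * Subcategories satisfying the three conditions lie in boxplus *)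

Section ConditionsImplyBoxplus.
Variable S : MorClass.
Hypothesis S_comp :
  forall m n p (f : mor m n) (g : mor n p), S f -> S g -> S (compm f g).
Hypothesis S_no_reversal : ~ S reversal.
Hypothesis S_no_diagonal : ~ S diagonal.
Hypothesis S_Delta1s : cond2 S.

Lemma S_precomp k m n (e : mor k m) (f : mor m n) : Delta1s e -> S f -> S (compm e f).
Proof. by move=> De; apply: S_comp (S_Delta1s De). Qed.

Lemma S_postcomp m n p (f : mor m n) (q : mor n p) : S f -> Delta1s q -> S (compm f q).
Proof. by move=> Sf Dq; apply: S_comp Sf (S_Delta1s Dq). Qed.

Lemma S_edge_monotone m n (f : mor m n) x a :
  S f -> cle (f (upd x a false)) (f (upd x a true)).
Proof.
move=> Sf; apply/cleP => j; apply/implyP => f0j; apply/negPn/negP => f1j.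
apply: S_no_reversal.
have -> : reversal = compm (compm (edge_map x a) f) (coord_map j).
  apply: mor1_ext => b; apply/ffunP => i.
  by rewrite !ffunE; case: b; rewrite ?f0j ?(negbTE f1j).
exact: S_postcomp (S_precomp (Delta1s_edge x a) Sf) (Delta1s_coord j).
Qed.

Lemma S_monotone m n (f : mor m n) : S f -> monotone f.
Proof. by move=> Sf; apply: edge_monotone => x a; apply: S_edge_monotone. Qed.

Lemma S_edge_hamming m n (f : mor m n) x a :
  S f -> hamming (f (upd x a false)) (f (upd x a true)) <= 1.
Proof.
move=> Sf; have /cleP le01 := S_edge_monotone x a Sf.
rewrite leqNgt; apply/negP => /card_gt1P [b [b' [bD b'D neq]]].
wlog lt : b b' bD b'D neq / b < b'.
  move=> W; case: (ltngtP b b') => [|gt|/val_inj eq_b]; first exact: W.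
    by apply: (W b' b); rewrite // eq_sym.
  by rewrite eq_b eqxx in neq.
have flip c : c \in diff_set (f (upd x a false)) (f (upd x a true)) ->
    (f (upd x a false) c = false) /\ (f (upd x a true) c = true).
  by rewrite inE; move: (le01 c); case: (f _ c); case: (f _ c).
have [f0b f1b] := flip _ bD; have [f0b' f1b'] := flip _ b'D.
apply: S_no_diagonal.
have -> : diagonal = compm (compm (edge_map x a) f) (pair_map b b').
  apply: mor1_ext => t; apply/ffunP => k; rewrite !ffunE.
  by case: t; rewrite ?f0b ?f0b' ?f1b ?f1b'; case: ifP.
exact: S_postcomp (S_precomp (Delta1s_edge x a) Sf) (Delta1s_pair lt).
Qed.

Lemma S_hamming_contract m n (f : mor m n) x y :
  S f -> hamming (f x) (f y) <= hamming x y.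
Proof. by move=> Sf; apply: edge_hamming_contract => x' a; apply: S_edge_hamming. Qed.

Lemma S_injective_image k n (i : mor k n) : S i -> injective i ->
  i @: [set: cube k] = interval (i (bot k)) (i (top k)).
Proof.
move=> Si inj_i; have sub := monotone_image_sub (bot k) (top k) (S_monotone Si).
rewrite interval_bot_top in sub.
apply/eqP; rewrite eqEcard sub card_imset // cardsT card_cube.
apply: leq_trans (card_interval _ _) _; rewrite leq_exp2l //.
by rewrite -[leqRHS](hamming_bot_top k) S_hamming_contract.
Qed.

Hypothesis S_factor : cond3 S.

Lemma S_image m n (f : mor m n) :
  S f -> f @: [set: cube m] = interval (f (bot m)) (f (top m)).
Proof.
move=> Sf; have [k [e [i [Se Si e_surj i_inj ->]]]] := S_factor Sf.
have e_onto : e @: [set: cube m] = [set: cube k].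
  by apply/setP => u; have [x <-] := e_surj u; rewrite in_setT imset_f ?in_setT.
have mono_e := S_monotone Se.
rewrite !compmE (monotone_surj_bot mono_e e_surj) (monotone_surj_top mono_e e_surj).
rewrite -S_injective_image // -e_onto -imset_comp.
by apply: eq_imset => x; rewrite compmE.
Qed.

Lemma S_interval_image m n (f : mor m n) x z :
  S f -> cle x z -> f @: interval x z = interval (f x) (f z).
Proof.
move=> Sf xz; have Sfr := S_precomp (Delta1s_retract x z) Sf.
rewrite -(retract_image xz) -imset_comp.
transitivity (compm (retract x z) f @: [set: cube m]).
  by apply: eq_imset => y; rewrite compmE.
by rewrite (S_image Sfr) !compmE retract_bot // retract_top.
Qed.

Lemma S_boxplus m n (f : mor m n) : S f -> boxplus f.
Proof.
move=> Sf; apply/boxplusP; split; first exact: S_monotone.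
by move=> x z; apply: S_interval_image.
Qed.

End ConditionsImplyBoxplus.

(** * boxplus satisfies the three conditions *)

Lemma boxplus_id n : boxplus (idm n).
Proof.
have mono : monotone (idm n) by move=> x y; rewrite !ffunE.
apply/boxplusP; split=> // x z _; apply: monotone_image_interval => // w.
by rewrite !ffunE => wI; apply/imsetP; exists w; rewrite ?ffunE.
Qed.

Lemma boxplus_comp m n p (f : mor m n) (g : mor n p) :
  boxplus f -> boxplus g -> boxplus (compm f g).
Proof.
move=> /boxplusP [mf If] /boxplusP [mg Ig]; apply/boxplusP; split=> [x y xy|x z xz].
  by rewrite !compmE; apply/mg/mf.
rewrite !compmE -Ig ?mf // -If // -imset_comp.
by apply: eq_imset => y; rewrite compmE.
Qed.

Lemma boxplus_from0 n (f : mor 0 n) : boxplus f.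
Proof.
apply/boxplusP; split=> [x y _|x z _]; first by rewrite (cube0 x y) cle_refl.
by rewrite (cube0 z x) !interval_id imset_set1.
Qed.

Lemma boxplus_to0 m (f : mor m 0) : boxplus f.
Proof.
have mono : monotone f by move=> x y _; rewrite (cube0 (f x) (f y)) cle_refl.
apply/boxplusP; split=> // x z xz; apply: monotone_image_interval => // w _.
by rewrite (cube0 w (f x)) imset_f // in_interval cle_refl xz.
Qed.

Lemma boxplus_prod a b c d (f : mor a b) (g : mor c d) :
  boxplus f -> boxplus g -> boxplus (prodm f g).
Proof.
move=> /boxplusP [mf If] /boxplusP [mg Ig].
have mono : monotone (prodm f g).
  by move=> x y; rewrite cle_split !ffunE cle_cconcat => /andP [l r]; rewrite mf ?mg.
apply/boxplusP; split=> // x z; rewrite cle_split => /andP [xzl xzr].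
apply: monotone_image_interval => // w.
rewrite -(cconcatK w) !ffunE in_interval !cle_cconcat.
move=> /andP [/andP [xwl xwr] /andP [wzl wzr]].
have /imsetP [y1 y1I ->] : cleft w \in f @: interval (cleft x) (cleft z).
  by rewrite If // in_interval xwl wzl.
have /imsetP [y2 y2I ->] : cright w \in g @: interval (cright x) (cright z).
  by rewrite Ig // in_interval xwr wzr.
apply/imsetP; exists (cconcat y1 y2); last by rewrite ffunE cleft_cconcat cright_cconcat.
move: y1I y2I; rewrite !in_interval !cle_split !cleft_cconcat !cright_cconcat.
by move=> /andP [-> ->] /andP [-> ->].
Qed.

Lemma Delta1s_sub_boxplus : cond2 boxplus.
Proof.
move=> m n f; elim=> {m n f} [f|f|n|m n p f g _ bf _ bg|a b c d f g _ bf _ bg].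
- exact: boxplus_from0.
- exact: boxplus_to0.
- exact: boxplus_id.
- exact: boxplus_comp.
- exact: boxplus_prod.
Qed.

Lemma boxplus_no_reversal : ~ boxplus reversal.
Proof.
case=> mono _; have : cle (pt false) (pt true) by apply/cleP => i; rewrite !ffunE.
by move/mono/cleP/(_ ord0); rewrite !ffunE.
Qed.

Lemma boxplus_no_diagonal : ~ boxplus diagonal.
Proof.
case/boxplusP => _ Idiag.
have le01 : cle (pt false) (pt true) by apply/cleP => i; rewrite !ffunE.
have : [ffun i : 'I_2 => i == ord0] \in interval (diagonal (pt false)) (diagonal (pt true)).
  by rewrite in_interval; apply/andP; split; apply/cleP => i; rewrite !ffunE ?implybT.
rewrite -Idiag // => /imsetP [y _ /ffunP eq_y].
by move: (eq_y ord0) (eq_y ord_max); rewrite !ffunE => <-.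
Qed.

Definition restrict_map n (D : {set 'I_n}) : mor n #|D| := [ffun y => restrict D y].
Definition extend_map n (D : {set 'I_n}) (c : cube n) : mor #|D| n :=
  [ffun u => extend D c u].

Lemma restrict_mapE n (D : {set 'I_n}) y : restrict_map D y = restrict D y.
Proof. exact: ffunE. Qed.

Lemma extend_mapE n (D : {set 'I_n}) c u : extend_map D c u = extend D c u.
Proof. exact: ffunE. Qed.

Lemma boxplus_restrict n (D : {set 'I_n}) : boxplus (restrict_map D).
Proof.
have mono : monotone (restrict_map D).
  by move=> y y' yy'; rewrite !restrict_mapE cle_restrict.
apply/boxplusP; split=> // p q pq; apply: monotone_image_interval => // u.
rewrite !restrict_mapE in_interval => /andP [pu uq].
by apply/imsetP; exists (extend D p u); rewrite ?restrict_mapE ?restrictK ?extend_interval.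
Qed.

Lemma boxplus_extend n (D : {set 'I_n}) (c : cube n) : boxplus (extend_map D c).
Proof.
have mono : monotone (extend_map D c).
  by move=> u u' uu'; rewrite !extend_mapE cle_extend ?cle_refl.
apply/boxplusP; split=> // u u' _; apply: monotone_image_interval => // w wI.
have wc j : j \notin D -> w j = c j.
  by move=> jD; rewrite (interval_fixed wI) !extend_mapE !extend_out.
apply/imsetP; exists (restrict D w); last by rewrite extend_mapE extendK.
move: wI; rewrite !extend_mapE !in_interval => /andP [uw wu'].
apply/andP; split; [rewrite -(restrictK c u) | rewrite -(restrictK c u')].
all: exact: cle_restrict.
Qed.

Lemma boxplus_factor : cond3 boxplus.
Proof.
move=> m n f bf; have /boxplusP [mf If] := bf.
pose a := f (bot m); pose b := f (top m); pose D := diff_set a b.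
have ab : cle a b by apply/mf/cle_bot.
have image_f : f @: [set: cube m] = interval a b by rewrite -interval_bot_top If // cle_bot.
have fI x : f x \in interval a b by rewrite -image_f imset_f ?in_setT.
have [restr_a restr_b] := restrict_diff_set ab.
exists #|D|, (compm f (restrict_map D)), (extend_map D a); split.
- exact: boxplus_comp bf (boxplus_restrict D).
- exact: boxplus_extend.
- move=> u; have : extend D a u \in interval a b.
    by apply: extend_interval; rewrite ?restr_a ?restr_b ?cle_bot ?cle_top.
  rewrite -image_f => /imsetP [x _ fx]; exists x.
  by rewrite compmE restrict_mapE -fx restrictK.
- by move=> u u'; rewrite !extend_mapE; apply: (can_inj (restrictK a)).
- apply/ffunP => x; rewrite !compmE restrict_mapE extend_mapE extendK // => j.
  by rewrite inE negbK => /eqP; apply: interval_fixed.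
Qed.

Theorem mainTheorem1 :
  (forall S : MorClass,
     is_subcat S -> cond1 S -> cond2 S -> cond3 S ->
     forall m n (f : mor m n), S m n f -> boxplus f)
  /\ (is_subcat boxplus /\ cond1 boxplus /\ cond2 boxplus /\ cond3 boxplus).
Proof.
split.
  move=> S [_ S_comp] [no_reversal no_diagonal] S_Delta1s S_factor m n f.
  exact: S_boxplus.
split; first by split; [exact: boxplus_id | exact: boxplus_comp].
split; first by split; [exact: boxplus_no_reversal | exact: boxplus_no_diagonal].
by split; [exact: Delta1s_sub_boxplus | exact: boxplus_factor].
Qed.
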